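(* Let $E$ be a congruence on $\overline{\boldsymbol{T}(X_1,\ldots,X_n)}$. If $\overline{\boldsymbol{T}(X_1,\ldots,X_n)}/E$ is not a semifield over $\boldsymbol{T}$, then $\boldsymbol{V}(E)=\varnothing$.
   Context: $\boldsymbol{T}=\mathbb{R}\cup\{-\infty\}$ with $a\oplus b=\max\{a,b\}$, $a\odot b=a+b$. $\overline{\boldsymbol{T}(X_1,\ldots,X_n)}$ is the semifield of fractions of the tropical polynomial function semiring (tropical polynomials modulo equality as functions $\boldsymbol{T}^n\to\boldsymbol{T}$); each element defines a function $\mathbb{R}^n\to\boldsymbol{T}$. A congruence is an equivalence relation compatible with both operations; $\boldsymbol{V}(E)=\{x\in\mathbb{R}^n\mid f(x)=g(x)\ \forall(f,g)\in E\}$. A semifield is a commutative semiring with $0\ne1$ whose nonzero elements are invertible; a semifield $S_2$ is a semifield over the semifield $S_1$ via a semiring homomorphism $S_1\to S_2$ if this homomorphism is injective; here the homomorphism is $\boldsymbol{T}\to\overline{\boldsymbol{T}(X_1,\ldots,X_n)}/E$ sending a constant to its class. *)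

From HB Require Import structures.
From mathcomp Require Import all_boot all_order all_algebra.
From mathcomp Require Import reals.
Set Implicit Arguments. Unset Strict Implicit. Unset Printing Implicit Defensive.
Import Order.TTheory GRing.Theory Num.Theory.
Local Open Scope ring_scope.

Section Tropical.
Context {R : realType} {n : nat}.

(** The tropical semifield T = R ∪ {-oo}; [None] is -oo. *)
Definition trop := option R.

Definition tadd (a b : trop) : trop :=
  match a, b with
  | None, _ => b
  | _, None => a
  | Some x, Some y => Some (Num.max x y)
  end.

Definition tmul (a b : trop) : trop :=
  match a, b with
  | Some x, Some y => Some (x + y)
  | _, _ => None
  end.

(** tropical power a^{⊙k} (a^0 = 0 = tropical one, even for a = -oo) *)
Definition tpow (a : trop) (k : nat) : trop :=
  match k with
  | 0%N => Some 0
  | _ => match a with Some x => Some (x *+ k) | None => None end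
  end.

(** Formal tropical polynomials in X_1..X_n: finite lists of monomials
    c ⊙ X^a with c ∈ R (terms with coefficient -oo are omitted),
    the empty list being the zero polynomial -oo. *)
Definition tmonom := (R * ('I_n -> nat))%type.
Definition tpoly := seq tmonom.

Definition mon_eval (m : tmonom) (x : 'I_n -> trop) : trop :=
  tmul (Some m.1) (\big[tmul/Some 0]_(i < n) tpow (x i) (m.2 i)).

Definition peval (p : tpoly) (x : 'I_n -> trop) : trop :=
  foldr (fun m acc => tadd (mon_eval m x) acc) None p.

Definition padd (p q : tpoly) : tpoly := p ++ q.
Definition pmul (p q : tpoly) : tpoly :=
  [seq (m.1 + m'.1, fun i => (m.2 i + m'.2 i)%N) | m <- p, m' <- q].
Definition pconst (c : R) : tpoly := [:: (c, fun _ => 0%N)].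
Definition pone : tpoly := pconst 0.

Lemma size_pmul_gt0 (p q : tpoly) :
  (0 < size p)%N -> (0 < size q)%N -> (0 < size (pmul p q))%N.
Proof. by move=> hp hq; rewrite /pmul size_allpairs muln_gt0 hp hq. Qed.

(** Fractions f/g of tropical polynomials with g nonzero
    (a nonempty list of monomials with real coefficients is a nonzero function). *)
Record tfrac := TFrac { num : tpoly; den : tpoly; den_pos : (0 < size den)%N }.

(** Equality in the semifield of fractions of the tropical polynomial FUNCTION
    semiring: f/g = f'/g' iff f ⊙ g' = f' ⊙ g as functions T^n -> T. *)
Definition frac_eq (a b : tfrac) : Prop :=
  forall x : 'I_n -> trop,
    tmul (peval (num a) x) (peval (den b) x) = tmul (peval (num b) x) (peval (den a) x).

Definition fadd (a b : tfrac) : tfrac :=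
  TFrac (padd (pmul (num a) (den b)) (pmul (num b) (den a)))
       (size_pmul_gt0 (den_pos a) (den_pos b)).
Definition fmul (a b : tfrac) : tfrac :=
  TFrac (pmul (num a) (num b)) (size_pmul_gt0 (den_pos a) (den_pos b)).

Definition fzero : tfrac := @TFrac [::] pone isT.
Definition fone : tfrac := @TFrac pone pone isT.
Definition fconst (c : trop) : tfrac :=
  match c with None => fzero | Some r => @TFrac (pconst r) pone isT end.

Definition fval (a : tfrac) (x : 'I_n -> R) : trop :=
  match peval (den a) (fun i => Some (x i)) with
  | Some d => tmul (peval (num a) (fun i => Some (x i))) (Some (- d))
  | None => None
  end.

(** A congruence on the semifield of fractions, presented as a relation on
    representatives which contains the equality of fractions. *)
Definition is_congruence (E : tfrac -> tfrac -> Prop) : Prop :=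
  (forall a b, frac_eq a b -> E a b) /\
  (forall a, E a a) /\
  (forall a b, E a b -> E b a) /\
  (forall a b c, E a b -> E b c -> E a c) /\
  (forall a b c d, E a b -> E c d -> E (fadd a c) (fadd b d)) /\
  (forall a b c d, E a b -> E c d -> E (fmul a c) (fmul b d)).

(** The quotient by E is a semifield (0 <> 1, nonzero classes invertible)
    and the map T -> quotient, c |-> [c], is injective. *)
Definition quotient_semifield_over_T (E : tfrac -> tfrac -> Prop) : Prop :=
  [/\ ~ E fzero fone,
      (forall a, ~ E a fzero -> exists b, E (fmul a b) fone) &
      (forall c d : trop, E (fconst c) (fconst d) -> c = d)].

Definition in_V (E : tfrac -> tfrac -> Prop) (x : 'I_n -> R) : Prop :=
  forall a b, E a b -> fval a x = fval b x.

End Tropical.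

From HB Require Import structures.
From mathcomp Require Import all_boot all_order all_algebra.
From mathcomp Require Import reals.
Set Implicit Arguments. Unset Strict Implicit. Unset Printing Implicit Defensive.
Import Order.TTheory GRing.Theory Num.Theory.
Local Open Scope ring_scope.

(* A point x of V(E) yields the evaluation map [f] |-> f(x) on the quotient,
   which restricts to the identity on the constants of T; hence the constants
   stay pairwise distinct in the quotient, in particular 0 <> 1.  Invertibility
   of the nonzero classes needs no point at all: a fraction f/g with f <> -oo
   already has the inverse g/f in the semifield of fractions. *)

Section TropicalArithmetic.
Context {R : realType}.

Lemma tmulA : associative (@tmul R).
Proof. by case=> [x|] [y|] [z|] //=; rewrite addrA. Qed.

Lemma tmulC : commutative (@tmul R).
Proof. by case=> [x|] [y|] //=; rewrite addrC. Qed.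

Lemma tmul1t : left_id (Some 0) (@tmul R).
Proof. by case=> //= x; rewrite add0r. Qed.

Lemma tmul0t : left_zero None (@tmul R).
Proof. by []. Qed.

Lemma tmult0 : right_zero None (@tmul R).
Proof. by case. Qed.

Lemma taddA : associative (@tadd R).
Proof. by case=> [x|] [y|] [z|] //=; rewrite maxA. Qed.

Lemma taddC : commutative (@tadd R).
Proof. by case=> [x|] [y|] //=; rewrite maxC. Qed.

Lemma tadd0t : left_id None (@tadd R).
Proof. by []. Qed.

Lemma tmulDl : left_distributive (@tmul R) (@tadd R).
Proof. by case=> [x|] [y|] [z|] //=; rewrite addr_maxl. Qed.

Lemma tmulDr : right_distributive (@tmul R) (@tadd R).
Proof. by case=> [x|] [y|] [z|] //=; rewrite addr_maxr. Qed.

HB.instance Definition _ := Monoid.isComLaw.Build (@trop R) (Some 0) tmul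
  tmulA tmulC tmul1t.
HB.instance Definition _ := Monoid.isMulLaw.Build (@trop R) None tmul
  tmul0t tmult0.
HB.instance Definition _ := Monoid.isComLaw.Build (@trop R) None tadd
  taddA taddC tadd0t.
HB.instance Definition _ := Monoid.isAddLaw.Build (@trop R) tmul tadd
  tmulDl tmulDr.

Lemma tpowD (a : @trop R) k l : tpow a (k + l) = tmul (tpow a k) (tpow a l).
Proof.
case: k => [|k]; first by rewrite tmul1t.
case: l => [|l]; first by rewrite addn0 tmulC tmul1t.
by case: a => //= x; rewrite -mulrnDr.
Qed.

End TropicalArithmetic.

Section PolynomialEvaluation.
Context {R : realType} {n : nat}.
Implicit Types (p q : @tpoly R n) (m : @tmonom R n) (y : 'I_n -> @trop R).

Lemma peval_big p y : peval p y = \big[tadd/None]_(m <- p) mon_eval m y.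
Proof. by elim: p => [|m p IHp]; rewrite ?big_nil ?big_cons //= IHp. Qed.

Lemma mon_evalM m m' y :
  mon_eval (m.1 + m'.1, fun i => (m.2 i + m'.2 i)%N) y
  = tmul (mon_eval m y) (mon_eval m' y).
Proof.
rewrite /mon_eval.
under eq_bigr do rewrite tpowD.
by rewrite big_split [RHS]Monoid.mulmACA.
Qed.

Lemma pevalM p q y : peval (pmul p q) y = tmul (peval p y) (peval q y).
Proof.
rewrite !peval_big big_allpairs_dep big_distrlr /=.
by apply: eq_bigr => m _; apply: eq_bigr => m' _; rewrite mon_evalM.
Qed.

Lemma peval_pconst (r : R) y : peval (pconst r) y = Some r.
Proof. by rewrite /= /mon_eval big1 //= addr0. Qed.

Lemma fval_fconst (c : @trop R) (x : 'I_n -> R) : fval (fconst c) x = c.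
Proof.
by case: c => [r|]; rewrite /fval !peval_pconst //= oppr0 addr0.
Qed.

End PolynomialEvaluation.

Section FractionInverse.
Context {R : realType} {n : nat}.
Implicit Type a : @tfrac R n.

Definition finv a (a_num_pos : (0 < size (num a))%N) : tfrac :=
  TFrac (den a) a_num_pos.

Lemma fmulV a (a_num_pos : (0 < size (num a))%N) :
  frac_eq (fmul a (finv a_num_pos)) fone.
Proof. by move=> y /=; rewrite !pevalM tmulC (tmulC (peval (den a) y)). Qed.

Lemma frac_eq_fzero a : size (num a) = 0%N -> frac_eq a fzero.
Proof. by move=> /size0nil a_num0 y; rewrite /= a_num0. Qed.

End FractionInverse.

Section Congruence.
Context {R : realType} {n : nat} (E : @tfrac R n -> @tfrac R n -> Prop).

Lemma congruence_unit (E_cong : is_congruence E) a :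
  ~ E a fzero -> exists b, E (fmul a b) fone.
Proof.
case: E_cong => frac_eqE _; have [a_num0 | a_num_pos] := posnP (size (num a)).
  by case; apply/frac_eqE/frac_eq_fzero.
by move=> _; exists (finv a_num_pos); apply/frac_eqE/fmulV.
Qed.

Lemma in_V_fconst_inj (x : 'I_n -> R) (c d : trop) :
  in_V E x -> E (fconst c) (fconst d) -> c = d.
Proof. by move=> xV /xV; rewrite !fval_fconst. Qed.

End Congruence.

Theorem lemma3p7 (R : realType) (n : nat) (E : @tfrac R n -> @tfrac R n -> Prop) :
  is_congruence E ->
  ~ quotient_semifield_over_T E ->
  forall x : 'I_n -> R, ~ in_V E x.
Proof.
move=> E_cong not_semifield x xV; apply: not_semifield; split.
- by move=> /(in_V_fconst_inj (c := None) (d := Some 0) xV).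
- exact: congruence_unit.
- by move=> c d; apply: in_V_fconst_inj xV.
Qed.
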